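(* Let $U$ be an $N\times N$ unitary matrix with no zero entries, let $S,T$ be $N\times N$ enphased permutation matrices, and let $V=SUT^{-1}$. Write $S=D_S\Pi_S$ and $T=D_T\Pi_T$ with $D_S,D_T$ unitary diagonal and $\Pi_S,\Pi_T$ permutation matrices. Then: (a) $\mathcal I_V=\Phi_{\Pi_S,\Pi_T}\,\mathcal I_U\,\Phi_{\Pi_S,\Pi_T}^{-1}$, i.e. $\mathcal I_U$ and $\mathcal I_V$ are similar with similarity operator $\Phi_{\Pi_S,\Pi_T}$; (b) the operators $\mathcal J_U=\mathcal C_U\mathcal D_U^{-1}$ and $\mathcal J_V=\mathcal C_V\mathcal D_V^{-1}$ satisfy $\mathcal J_V=\Phi_{S,S}\,\mathcal J_U\,\Phi_{S,S}^{-1}$.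
   Context: An enphased permutation matrix is a product of a permutation matrix and a unitary diagonal matrix; such a factorization $S=D\Pi$ is unique. $\circ$ denotes the entrywise (Hadamard) product and $X^*$ the conjugate transpose. For an $N\times N$ unitary $W$ with no zero entries, the linear operators $\mathcal C_W,\mathcal D_W$ on $\mathbb C^{N\times N}$ are $\mathcal C_W(F)=(F\circ W)W^*$ and $\mathcal D_W(F)=W(\overline F\circ W)^*$; both are invertible, and $\mathcal I_W=\mathcal C_W^{-1}\mathcal D_W$ (the Berezin transform). For matrices $A,B$ with $B$ invertible, $\Phi_{A,B}$ is the operator $X\mapsto AXB^{-1}$ on $\mathbb C^{N\times N}$. *)

(* Complex scalars: an arbitrary numClosedFieldType C
   (e.g. algC, or complex R for R real closed). *)
From HB Require Import structures.
From mathcomp Require Import all_boot all_order all_algebra all_fingroup.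
Set Implicit Arguments. Unset Strict Implicit. Unset Printing Implicit Defensive.
Import Order.TTheory GRing.Theory Num.Theory.
Local Open Scope ring_scope.

Section Defs.
Variables (C : numClosedFieldType) (N : nat).
Implicit Types (A B F W X : 'M[C]_N).

Definition conjm A : 'M[C]_N := map_mx Num.conj A.
Definition ctr A : 'M[C]_N := (conjm A)^T.

Definition hadamard A B : 'M[C]_N := \matrix_(i, j) (A i j * B i j).

Definition unitary_mx W := W *m ctr W = 1%:M.
Definition no_zero_entries W := forall i j, W i j != 0.

(* unitary diagonal matrix given by its diagonal *)
Definition unimod_row (d : 'rV[C]_N) := forall i, `|d 0 i| = 1.
Definition enphased (d : 'rV[C]_N) (s : 'S_N) : 'M[C]_N := diag_mx d *m perm_mx s.

Definition Cop W F : 'M[C]_N := hadamard F W *m ctr W.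
Definition Dop W F : 'M[C]_N := W *m ctr (hadamard (conjm F) W).

(* matrices (acting on mxvec row vectors, X |-> mxvec X *m M) of these
   operators; operator composition f then g corresponds to M_f *m M_g *)
Definition Cmx W : 'M[C]_(N * N) := lin_mx (Cop W).
Definition Dmx W : 'M[C]_(N * N) := lin_mx (Dop W).

(* Berezin transform I_W = C_W^{-1} D_W, and J_W = C_W D_W^{-1} *)
Definition Iop W X : 'M[C]_N := vec_mx (mxvec X *m (Dmx W *m invmx (Cmx W))).
Definition Jop W X : 'M[C]_N := vec_mx (mxvec X *m (invmx (Dmx W) *m Cmx W)).

Definition Phi A B X : 'M[C]_N := A *m X *m invmx B.
Definition Phi_inv A B X : 'M[C]_N := invmx A *m X *m B.
End Defs.

(* Permutations and unitary diagonal matrices pass through the Hadamard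
   product, so for V = S U T^{-1} one gets the intertwining relations
   C_V Phi_{Pi_S,Pi_T} = Phi_{S,S} C_U and D_V Phi_{Pi_S,Pi_T} = Phi_{S,S} D_U:
   the phases of T cancel against those of T^{-1} = T^* inside C_V and D_V,
   and the phases of S survive only as the outer conjugation by S.
   Both similarities follow formally, using that C_W and D_W are bijective
   when W is unitary without zero entries. *)

From HB Require Import structures.
From mathcomp Require Import all_boot all_order all_algebra all_fingroup.
Import Order.TTheory GRing.Theory Num.Theory.
Local Open Scope ring_scope.
Set Implicit Arguments. Unset Strict Implicit.

Lemma lin_mx_unit (K : fieldType) (m n : nat)
    (f : {linear 'M[K]_(m, n) -> 'M[K]_(m, n)}) :
  injective f -> lin_mx f \in unitmx.
Proof.
move=> f_inj; rewrite -row_free_unit; apply: inj_row_free => v.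
rewrite -[v]vec_mxK mul_vec_lin => /(congr1 vec_mx); rewrite mxvecK linear0.
by rewrite -(linear0 f) => /f_inj ->; rewrite linear0.
Qed.

Section ConjugateTranspose.
Variables (C : numClosedFieldType) (N : nat).
Implicit Types (A B W : 'M[C]_N).

Lemma ctrM A B : ctr (A *m B) = ctr B *m ctr A.
Proof. by rewrite /ctr /conjm map_mxM trmx_mul. Qed.

Lemma ctrK A : ctr (ctr A) = A.
Proof. by apply/matrixP=> i j; rewrite !mxE conjCK. Qed.

Lemma ctr0 : ctr (0 : 'M[C]_N) = 0.
Proof. by apply/matrixP=> i j; rewrite !mxE rmorph0. Qed.

Lemma ctr_perm (s : 'S_N) : ctr (perm_mx s) = perm_mx s^-1 :> 'M[C]_N.
Proof. by rewrite /ctr /conjm map_perm_mx tr_perm_mx. Qed.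

Lemma ctr_diag (d : 'rV[C]_N) : ctr (diag_mx d) = diag_mx (map_mx Num.conj d).
Proof. by rewrite /ctr /conjm map_diag_mx tr_diag_mx. Qed.

Lemma unitary_mxC W : unitary_mx W -> ctr W *m W = 1%:M.
Proof. exact: mulmx1C. Qed.

Lemma mulmx_ctr_unitaryK A B W :
  unitary_mx W -> A *m ctr W *m ctr (B *m ctr W) = A *m ctr B.
Proof. by move=> uW; rewrite ctrM ctrK mulmxA -(mulmxA A) unitary_mxC // mulmx1. Qed.

Lemma unitary_mx_unit W : unitary_mx W -> W \in unitmx.
Proof. by case/mulmx1_unit. Qed.

Lemma invmx_unitary W : unitary_mx W -> invmx W = ctr W.
Proof.
by move=> uW; rewrite -[RHS](mulKmx (unitary_mx_unit uW)) uW mulmx1.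
Qed.

Lemma unitary_mxM A B : unitary_mx A -> unitary_mx B -> unitary_mx (A *m B).
Proof.
by move=> uA uB; rewrite /unitary_mx ctrM mulmxA -(mulmxA A) uB mulmx1.
Qed.

Lemma unitary_ctr W : unitary_mx W -> unitary_mx (ctr W).
Proof. by move=> uW; rewrite /unitary_mx ctrK unitary_mxC. Qed.

Lemma unitary_perm (s : 'S_N) : unitary_mx (perm_mx s : 'M[C]_N).
Proof. by rewrite /unitary_mx ctr_perm -perm_mxM mulgV perm_mx1. Qed.

Lemma invmx_perm (s : 'S_N) : invmx (perm_mx s) = perm_mx s^-1 :> 'M[C]_N.
Proof. by rewrite invmx_unitary ?ctr_perm //; apply: unitary_perm. Qed.

Lemma unitary_diag (d : 'rV[C]_N) : unimod_row d -> unitary_mx (diag_mx d).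
Proof.
move=> d1; apply/matrixP=> i j; rewrite mul_diag_mx !mxE eq_sym.
have [->|_] := eqP; last by rewrite mulr0n rmorph0 mulr0.
by rewrite !mulr1n -normCK d1 expr1n.
Qed.

Lemma unitary_enphased (d : 'rV[C]_N) (s : 'S_N) :
  unimod_row d -> unitary_mx (enphased d s).
Proof. by move=> d1; apply: unitary_mxM; [apply: unitary_diag | apply: unitary_perm]. Qed.

Lemma unimod_row_neq0 (d : 'rV[C]_N) i : unimod_row d -> d 0 i != 0.
Proof. by move=> d1; rewrite -normr_eq0 d1 oner_eq0. Qed.

End ConjugateTranspose.

Section Hadamard.
Variables (C : numClosedFieldType) (N : nat).
Implicit Types (A B : 'M[C]_N).

Lemma hadamard_perm (s t : 'S_N) A B :
  hadamard (perm_mx s *m A *m perm_mx t) (perm_mx s *m B *m perm_mx t)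
  = perm_mx s *m hadamard A B *m perm_mx t.
Proof.
rewrite -!row_permE -[t]invgK -!col_permE.
by apply/matrixP=> i j; rewrite !mxE.
Qed.

Lemma hadamard_diagl (d : 'rV[C]_N) A B :
  hadamard A (diag_mx d *m B) = diag_mx d *m hadamard A B.
Proof. by apply/matrixP=> i j; rewrite !mul_diag_mx !mxE mulrCA. Qed.

Lemma hadamard_diagr (d : 'rV[C]_N) A B :
  hadamard A (B *m diag_mx d) = hadamard A B *m diag_mx d.
Proof. by apply/matrixP=> i j; rewrite !mul_mx_diag !mxE mulrA. Qed.

Lemma hadamardl_is_linear B : linear (fun A : 'M[C]_N => hadamard A B).
Proof. by move=> a F G; apply/matrixP=> i j; rewrite !mxE mulrDl mulrA. Qed.

Lemma hadamard_eq0 A B : (forall i j, B i j != 0) ->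
  hadamard A B = 0 -> A = 0.
Proof.
move=> nzB /matrixP AB0; apply/matrixP=> i j; move/eqP: (AB0 i j).
by rewrite !mxE mulf_eq0 (negPf (nzB i j)) orbF => /eqP.
Qed.

End Hadamard.

Section Operators.
Variables (C : numClosedFieldType) (N : nat) (W : 'M[C]_N).

Lemma Cop_is_linear : linear (Cop W).
Proof. by move=> a F G; rewrite /Cop hadamardl_is_linear mulmxDl scalemxAl. Qed.

HB.instance Definition _ :=
  GRing.isLinear.Build C 'M[C]_N 'M[C]_N *:%R (Cop W) Cop_is_linear.

Lemma DopE F : Dop W F = W *m (hadamard F (conjm W))^T.
Proof. by congr (_ *m _); apply/matrixP=> i j; rewrite !mxE rmorphM /= conjCK. Qed.

Lemma Dop_is_linear : linear (Dop W).
Proof.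
move=> a F G; rewrite !DopE hadamardl_is_linear.
by rewrite linearD linearZ /= mulmxDr scalemxAr.
Qed.

HB.instance Definition _ :=
  GRing.isLinear.Build C 'M[C]_N 'M[C]_N *:%R (Dop W) Dop_is_linear.

Hypotheses (uW : unitary_mx W) (nzW : no_zero_entries W).

Lemma Cop_inj : injective (Cop W).
Proof.
apply: raddf_inj => F; rewrite /Cop => /(congr1 (mulmx^~ W)).
rewrite -mulmxA unitary_mxC // mulmx1 mul0mx; exact: hadamard_eq0.
Qed.

Lemma Dop_inj : injective (Dop W).
Proof.
apply: raddf_inj => F; rewrite /Dop => /(congr1 (mulmx (ctr W))).
rewrite mulmxA unitary_mxC // mul1mx mulmx0 => /(congr1 (@ctr _ _)).
rewrite ctrK ctr0 => /(hadamard_eq0 nzW) /matrixP F0.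
by apply/matrixP=> i j; move/eqP: (F0 i j); rewrite !mxE conjC_eq0 => /eqP.
Qed.

Lemma Cmx_unit : Cmx W \in unitmx.
Proof. exact: (lin_mx_unit Cop_inj). Qed.

Lemma Dmx_unit : Dmx W \in unitmx.
Proof. exact: (lin_mx_unit Dop_inj). Qed.

Lemma Cop_Iop X : Cop W (Iop W X) = Dop W X.
Proof.
rewrite -[Cop W _]mxvecK -mul_vec_lin /Iop vec_mxK mulmxA mulmxKV ?Cmx_unit //.
by rewrite /Dmx mul_vec_lin mxvecK.
Qed.

Lemma Jop_Dop F : Jop W (Dop W F) = Cop W F.
Proof.
rewrite /Jop -[mxvec (Dop W F)](mul_vec_lin (Dop W)) mulmxA mulmxK ?Dmx_unit //.
by rewrite /Cmx mul_vec_lin mxvecK.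
Qed.

Lemma Dop_surj X : exists F, Dop W F = X.
Proof.
exists (vec_mx (mxvec X *m invmx (Dmx W))).
by rewrite -[Dop W _]mxvecK -mul_vec_lin vec_mxK mulmxKV ?Dmx_unit ?mxvecK.
Qed.

End Operators.

Lemma Phi_invK (C : numClosedFieldType) (N : nat) (A B : 'M[C]_N) :
  A \in unitmx -> B \in unitmx -> cancel (Phi_inv A B) (Phi A B).
Proof. by move=> uA uB X; rewrite /Phi /Phi_inv !mulmxA mulmxV // mul1mx mulmxK. Qed.

Lemma PhiK (C : numClosedFieldType) (N : nat) (A B : 'M[C]_N) :
  A \in unitmx -> B \in unitmx -> cancel (Phi A B) (Phi_inv A B).
Proof. by move=> uA uB X; rewrite /Phi /Phi_inv !mulmxA mulVmx // mul1mx mulmxKV. Qed.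

Section Intertwining.
Variables (C : numClosedFieldType) (N : nat) (U : 'M[C]_N).
Variables (a b : 'rV[C]_N) (s t : 'S_N).
Hypotheses (a1 : unimod_row a) (b1 : unimod_row b).

Let S := enphased a s.
Let T := enphased b t.
Let V := S *m U *m invmx T.
Let Psi := Phi (perm_mx s) (perm_mx t : 'M[C]_N).

Let uS : unitary_mx S := unitary_enphased s a1.
Let uT : unitary_mx T := unitary_enphased t b1.

Lemma enphased_conjE :
  V = diag_mx a *m (perm_mx s *m U *m perm_mx t^-1) *m diag_mx (map_mx Num.conj b).
Proof. by rewrite /V invmx_unitary // /S /T /enphased ctrM ctr_perm ctr_diag !mulmxA. Qed.

Lemma hadamard_Phi_perm Z : hadamard (Psi Z) V = S *m hadamard Z U *m ctr T.
Proof.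
rewrite /Psi /Phi invmx_perm enphased_conjE.
rewrite hadamard_diagr hadamard_diagl hadamard_perm.
by rewrite /S /T /enphased ctrM ctr_perm ctr_diag !mulmxA.
Qed.

Lemma unitary_enphased_conj : unitary_mx U -> unitary_mx V.
Proof.
move=> uU; rewrite /V invmx_unitary //.
by apply: unitary_mxM; [apply: unitary_mxM | apply: unitary_ctr].
Qed.

Lemma no_zero_entries_enphased_conj : no_zero_entries U -> no_zero_entries V.
Proof.
move=> nzU i j; rewrite enphased_conjE mul_mx_diag mul_diag_mx.
rewrite -row_permE -[t]invgK -col_permE !mxE.
by rewrite !mulf_neq0 ?conjC_eq0 ?nzU ?unimod_row_neq0.
Qed.

Lemma Cop_Phi_perm Z : Cop V (Psi Z) = Phi S S (Cop U Z).
Proof.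
rewrite /Cop hadamard_Phi_perm /Phi /V !invmx_unitary //.
by rewrite mulmx_ctr_unitaryK // ctrM !mulmxA.
Qed.

Lemma Dop_Phi_perm Z : Dop V (Psi Z) = Phi S S (Dop U Z).
Proof.
have conj_Psi : conjm (Psi Z) = Psi (conjm Z).
  by rewrite /Psi /Phi invmx_perm /conjm !map_mxM !map_perm_mx.
rewrite /Dop conj_Psi hadamard_Phi_perm /Phi /V !invmx_unitary //.
by rewrite mulmx_ctr_unitaryK // ctrM !mulmxA.
Qed.

End Intertwining.

Theorem corollary3p5 (C : numClosedFieldType) (N : nat) (U : 'M[C]_N)
  (dS dT : 'rV[C]_N) (sS sT : 'S_N) :
  unitary_mx U -> no_zero_entries U ->
  unimod_row dS -> unimod_row dT ->
  let S := enphased dS sS in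
  let T := enphased dT sT in
  let V := S *m U *m invmx T in
  (forall X : 'M[C]_N,
     Iop V X = Phi (perm_mx sS) (perm_mx sT)
                   (Iop U (Phi_inv (perm_mx sS) (perm_mx sT) X)))
  /\
  (forall X : 'M[C]_N,
     Jop V X = Phi S S (Jop U (Phi_inv S S X))).
Proof.
move=> uU nzU S1 T1 S T V.
have uV : unitary_mx V := unitary_enphased_conj sS sT S1 T1 uU.
have nzV : no_zero_entries V := no_zero_entries_enphased_conj sS sT S1 T1 nzU.
have CV_Phi := Cop_Phi_perm U sS sT S1 T1.
have DV_Phi := Dop_Phi_perm U sS sT S1 T1.
have uP (r : 'S_N) : perm_mx r \in unitmx := unitary_mx_unit (unitary_perm C r).
have uS : S \in unitmx := unitary_mx_unit (unitary_enphased sS S1).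
split=> X.
  apply: (Cop_inj uV nzV); rewrite CV_Phi !Cop_Iop //.
  by rewrite -DV_Phi Phi_invK.
have [F <-] := Dop_surj uV nzV X.
by rewrite Jop_Dop // -[F](Phi_invK (uP sS) (uP sT)) CV_Phi DV_Phi PhiK // Jop_Dop.
Qed.
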